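(* Let $p,l\in\mathbb{Z}_{\geq 0}$. For every $M\in\mathrm{Sym}_\infty^{p}$ with $\mathrm{rk}(M)\geq p2^pl$, the image of the orbit $G_\infty M$ under the projection $\mathrm{Sym}_\infty^{p}\to\mathrm{Sym}_l^{p}$ (taking upper-left $l\times l$ blocks) is Zariski dense in $\mathrm{Sym}_l^{p}$.
   Context: $\mathrm{Sym}_\infty$ is the space of symmetric complex $\mathbb{N}\times\mathbb{N}$ matrices, viewed as linear maps from finitely supported sequences $\mathbb{C}^\infty_{\mathrm{fin}}$ to all sequences $\mathbb{C}^\infty$; $\mathrm{Sym}_l$ is the space of symmetric complex $l\times l$ matrices. $G_\infty=\bigcup_k\mathrm{GL}_k(\mathbb{C})$ (embedded via $g\mapsto\mathrm{diag}(g,\mathrm{Id})$) acts on $\mathrm{Sym}_\infty^p$ by $g\cdot(M_1,\dots,M_p)=(gM_1g^T,\dots,gM_pg^T)$. Rank of a tuple: for $M=(M_1,\dots,M_s)\in\mathrm{Hom}(V,W)^s$, $\mathrm{rk}(M)$ is the infimum of $\mathrm{rk}(\sum_i\lambda_iM_i)\in\mathbb{Z}_{\ge0}\cup\{\infty\}$ over all nonzero $(\lambda_1,\dots,\lambda_s)\in\mathbb{C}^s$ (so $\mathrm{rk}(M)=\infty$ if $s=0$). *)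

From HB Require Import structures.
From mathcomp Require Import all_boot all_order all_algebra.
Set Implicit Arguments. Unset Strict Implicit. Unset Printing Implicit Defensive.
Import Order.TTheory GRing.Theory Num.Theory.
Local Open Scope ring_scope.

Definition infmx (K : Type) := nat -> nat -> K.

Definition symmetric_infmx (K : Type) (A : infmx K) : Prop :=
  forall a b, A a b = A b a.

(* Rank of an infinite matrix A, viewed as a linear map from finitely supported
   sequences to all sequences, is at least r: the image contains r linearly
   independent vectors, i.e. there are r finitely supported vectors
   (supported in [0,N)) whose images are linearly independent. *)
Definition infmx_rank_ge (K : fieldType) (A : infmx K) (r : nat) : Prop :=
  exists (N : nat) (v : 'I_r -> 'I_N -> K),
    forall mu : 'I_r -> K,
      (forall a : nat, \sum_(j < r) mu j * (\sum_(c < N) A a c * v j c) = 0) ->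
      forall j, mu j = 0.

(* rk(M) >= r for a tuple M = (M_1,...,M_p): every nonzero linear combination
   has rank >= r (infimum over nonzero lambda; infinite when p = 0). *)
Definition tuple_rank_ge (K : fieldType) (p : nat) (M : 'I_p -> infmx K)
    (r : nat) : Prop :=
  forall lam : 'I_p -> K, (exists i, lam i != 0) ->
    infmx_rank_ge (fun a b => \sum_(i < p) lam i * M i a b) r.

(* Embedding g in GL_k into G_infty as diag(g, Id). *)
Definition ext_mx (K : fieldType) (k : nat) (g : 'M[K]_k) : infmx K :=
  fun a b =>
    match insub a, insub b with
    | Some i, Some j => g i j
    | _, _ => if a == b then 1 else 0
    end.

(* The infinite matrix g A g^T for g = diag(g, Id); row a of ext_mx g is
   supported in [0, k + a + 1), so the sums below are exact. *)
Definition act_infmx (K : fieldType) (k : nat) (g : 'M[K]_k) (A : infmx K)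
    : infmx K :=
  fun a b => \sum_(c < k + a.+1) \sum_(d < k + b.+1)
               ext_mx g a c * A c d * ext_mx g b d.

Definition ul_block (K : Type) (l : nat) (A : infmx K) : 'M[K]_l :=
  \matrix_(i < l, j < l) A i j.

Inductive pexpr (V K : Type) : Type :=
| PConst of K
| PVar of V
| PAdd of pexpr V K & pexpr V K
| PMul of pexpr V K & pexpr V K.

Fixpoint peval (V : Type) (K : pzRingType) (e : V -> K) (f : pexpr V K) : K :=
  match f with
  | PConst c => c
  | PVar x => e x
  | PAdd f1 f2 => peval e f1 + peval e f2
  | PMul f1 f2 => peval e f1 * peval e f2
  end.

Definition sym_tuple (K : Type) (p l : nat) (X : 'I_p -> 'M[K]_l) : Prop :=
  forall k, (X k)^T = X k.

Definition coords (K : Type) (p l : nat) (X : 'I_p -> 'M[K]_l)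
    : 'I_p * 'I_l * 'I_l -> K :=
  fun v => X v.1.1 v.1.2 v.2.

Definition zariski_dense_sym (K : fieldType) (p l : nat)
    (S : ('I_p -> 'M[K]_l) -> Prop) : Prop :=
  forall f : pexpr ('I_p * 'I_l * 'I_l) K,
    (forall X, S X -> peval (coords X) f = 0) ->
    forall X, sym_tuple X -> peval (coords X) f = 0.

Definition proj_orbit (K : fieldType) (p l : nat) (M : 'I_p -> infmx K)
    : ('I_p -> 'M[K]_l) -> Prop :=
  fun X => exists (k : nat) (g : 'M[K]_k), g \in unitmx /\
    forall i, X i = ul_block l (act_infmx g (M i)).

From HB Require Import structures.
From mathcomp Require Import all_boot all_order all_algebra.
From mathcomp Require Import zify ring.
From Stdlib Require Import Classical.
Import Order.TTheory GRing.Theory Num.Theory.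
Set Implicit Arguments. Unset Strict Implicit. Unset Printing Implicit Defensive.
Local Open Scope ring_scope.

(* Row a of diag(g, Id) is a finitely supported vector x_a, and the (a, b) entry
   of g M_i g^T is x_a^T M_i x_b.  Given any symmetric tuple X, the rank
   hypothesis lets us construct vectors h_a with h_a^T M_i h_b = X_i(a, b).  This
   is done one index k at a time: h is corrected by a combination Y w of l new
   vectors w that are M_k-orthonormal and M_i-isotropic and M_i-orthogonal to h
   for i < k, and the correction Y solves a quadratic matrix equation, which is
   possible because every symmetric matrix over an algebraically closed field is
   of the form B B^T.  The vectors w exist because a symmetric form of rank
   > 2c is anisotropic on every subspace of codimension c, and isotropy for
   M_0, ..., M_(k-1) is obtained one form at a time by combining two vectors.
   Finally the rows h_a + t e_a come from an invertible g whenever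
   det(t + H) != 0, so a polynomial vanishing on the orbit vanishes along this
   line for all but finitely many t, hence at t = 0, that is at X. *)

Lemma sum_ord_pad (V : nmodType) n m (F : nat -> V) :
  (n <= m)%N -> (forall i, (n <= i)%N -> F i = 0) ->
  \sum_(i < m) F i = \sum_(i < n) F i.
Proof.
move=> le_nm F0; rewrite [RHS](big_ord_widen _ _ le_nm) [RHS]big_mkcond /=.
by apply: eq_bigr => i _; case: ltnP => // /F0.
Qed.

Lemma size_enum_ord_lt n j :
  (j <= n)%N -> size [seq i : 'I_n <- enum 'I_n | (i < j)%N] = j.
Proof.
move=> le_jn; rewrite -(size_map val) -(filter_map val (fun m => (m < j)%N)).
by rewrite val_enum_ord (filter_iota_ltn 0 le_jn) size_iota.
Qed.

Section FinitelySupportedForm.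
Variable R : comNzRingType.
Implicit Types (A : infmx R) (x y : {poly R}).

(* Finitely supported sequences are represented by polynomials (their
   coefficient sequences); [bform A x y] is x^T A y. *)
Definition bform A x y : R :=
  \sum_(a < size x) \sum_(b < size y) x`_a * A a b * y`_b.

Lemma bformE A n m x y : (size x <= n)%N -> (size y <= m)%N ->
  bform A x y = \sum_(a < n) \sum_(b < m) x`_a * A a b * y`_b.
Proof.
move=> sx sy.
rewrite (sum_ord_pad (F := fun a => \sum_(b < m) x`_a * A a b * y`_b) sx) => [|a ha].
  apply: eq_bigr => a _.
  rewrite (sum_ord_pad (F := fun b => x`_a * A a b * y`_b) sy) // => b hb.
  by rewrite [y`_b]nth_default // mulr0.
by apply: big1 => b _; rewrite nth_default // !mul0r.
Qed.

Lemma bformDl A x x' y : bform A (x + x') y = bform A x y + bform A x' y.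
Proof.
have le_x : (size x <= size x + size x')%N by rewrite leq_addr.
have le_x' : (size x' <= size x + size x')%N by rewrite leq_addl.
have le_xx' : (size (x + x')%R <= size x + size x')%N.
  by rewrite (leq_trans (size_polyD _ _)) // geq_max le_x le_x'.
rewrite (bformE A le_xx' (leqnn _)) (bformE A le_x (leqnn _)).
rewrite (bformE A le_x' (leqnn _)) -big_split.
by apply: eq_bigr => a _; rewrite -big_split; apply: eq_bigr => b _; rewrite coefD !mulrDl.
Qed.

Lemma bformZl A c x y : bform A (c *: x) y = c * bform A x y.
Proof.
rewrite !(bformE A (size_scale_leq c x) (leqnn (size y))) mulr_sumr.
by apply: eq_bigr => a _; rewrite mulr_sumr; apply: eq_bigr => b _; rewrite coefZ; ring.
Qed.

Lemma bform_swap A x y : bform A x y = bform (fun a b => A b a) y x.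
Proof.
rewrite /bform exchange_big /=.
by apply: eq_bigr => b _; apply: eq_bigr => a _; ring.
Qed.

Lemma bform_sym A x y : symmetric_infmx A -> bform A x y = bform A y x.
Proof.
move=> symA; rewrite bform_swap /bform.
by apply: eq_bigr => b _; apply: eq_bigr => a _; rewrite symA.
Qed.

Lemma bformDr A x y y' : bform A x (y + y') = bform A x y + bform A x y'.
Proof. by rewrite !(bform_swap A) bformDl. Qed.

Lemma bformZr A c x y : bform A x (c *: y) = c * bform A x y.
Proof. by rewrite !(bform_swap A) bformZl. Qed.

Lemma bform_suml A n (u : 'I_n -> {poly R}) y :
  bform A (\sum_(a < n) u a) y = \sum_(a < n) bform A (u a) y.
Proof.
apply: (big_morph (bform A ^~ y)) => [x x'|]; first exact: bformDl.
by rewrite -(scale0r 0) bformZl mul0r.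
Qed.

Lemma bform_sumr A n x (v : 'I_n -> {poly R}) :
  bform A x (\sum_(b < n) v b) = \sum_(b < n) bform A x (v b).
Proof. by rewrite bform_swap bform_suml; apply: eq_bigr => b _; rewrite -bform_swap. Qed.

Lemma bform_add_orth A t x y : symmetric_infmx A -> bform A x y = 0 ->
  bform A (x + t *: y) (x + t *: y) = bform A x x + t ^+ 2 * bform A y y.
Proof.
move=> symA xy0; rewrite !bformDl !bformDr !bformZl !bformZr (bform_sym y) // xy0.
by rewrite !mulr0 addr0 add0r mulrA -expr2.
Qed.

Lemma bformXX A a b : bform A 'X^a 'X^b = A a b.
Proof.
rewrite (bformE A (leqnn _) (leqnn _)) !size_polyXn.
rewrite big_ord_recr big1 /= => [|c _]; last first.
  by apply: big1 => d _; rewrite coefXn ltn_eqF // !mul0r.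
rewrite add0r big_ord_recr big1 /= => [|d _]; last by rewrite (coefXn _ b d) ltn_eqF // mulr0.
by rewrite !coefXn !eqxx add0r mul1r mulr1.
Qed.

Definition bform_line A x y x' y' : {poly R} :=
  (bform A x x')%:P + (bform A x y' + bform A y x') *: 'X + bform A y y' *: 'X^2.

Lemma bform_lineE A x y x' y' t :
  (bform_line A x y x' y').[t] = bform A (x + t *: y) (x' + t *: y').
Proof. by rewrite !hornerE /= !bformDl !bformDr !bformZl !bformZr; ring. Qed.

Definition lincomb_infmx p (mu : 'I_p -> R) (M : 'I_p -> infmx R) : infmx R :=
  fun a b => \sum_(i < p) mu i * M i a b.

Lemma lincomb_infmx_sym p mu (M : 'I_p -> infmx R) :
  (forall i, symmetric_infmx (M i)) -> symmetric_infmx (lincomb_infmx mu M).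
Proof. by move=> symM a b; apply: eq_bigr => i _; rewrite symM. Qed.

Lemma bform_lincomb p mu (M : 'I_p -> infmx R) x y :
  bform (lincomb_infmx mu M) x y = \sum_(i < p) mu i * bform (M i) x y.
Proof.
rewrite /bform /lincomb_infmx.
transitivity (\sum_(a < size x) \sum_(b < size y) \sum_(i < p)
                mu i * (x`_a * M i a b * y`_b)).
  apply: eq_bigr => a _; apply: eq_bigr => b _.
  by rewrite mulr_sumr mulr_suml; apply: eq_bigr => i _; ring.
under eq_bigr => a _ do rewrite exchange_big /=.
rewrite exchange_big /=; apply: eq_bigr => i _.
by rewrite mulr_sumr; apply: eq_bigr => a _; rewrite mulr_sumr.
Qed.

Lemma bform_lincomb_delta p (M : 'I_p -> infmx R) k x y :
  bform (lincomb_infmx (fun i => (i == k)%:R) M) x y = bform (M k) x y.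
Proof.
rewrite bform_lincomb (bigD1 k) //= eqxx mul1r big1 ?addr0 // => i /negPf ->.
exact: mul0r.
Qed.

Lemma bform_lincombB p (M : 'I_p -> infmx R) a b mu nu x y :
  bform (lincomb_infmx (fun i => a * mu i - b * nu i) M) x y =
  a * bform (lincomb_infmx mu M) x y - b * bform (lincomb_infmx nu M) x y.
Proof. by rewrite !bform_lincomb !mulr_sumr -sumrB; apply: eq_bigr => i _; ring. Qed.

Definition gram A n m (u : 'I_n -> {poly R}) (v : 'I_m -> {poly R}) : 'M[R]_(n, m) :=
  \matrix_(a, b) bform A (u a) (v b).

Definition mxcomb n m (Y : 'M[R]_(n, m)) (w : 'I_m -> {poly R}) (a : 'I_n) :=
  \sum_(b < m) Y a b *: w b.

Lemma gramDl A n m (u u' : 'I_n -> {poly R}) (v : 'I_m -> {poly R}) :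
  gram A (fun a => u a + u' a) v = gram A u v + gram A u' v.
Proof. by apply/matrixP => a b; rewrite !mxE bformDl. Qed.

Lemma gramDr A n m (u : 'I_n -> {poly R}) (v v' : 'I_m -> {poly R}) :
  gram A u (fun b => v b + v' b) = gram A u v + gram A u v'.
Proof. by apply/matrixP => a b; rewrite !mxE bformDr. Qed.

Lemma gram_combl A n m k (Y : 'M[R]_(n, m)) w (v : 'I_k -> {poly R}) :
  gram A (mxcomb Y w) v = Y *m gram A w v.
Proof.
apply/matrixP => a b; rewrite !mxE bform_suml.
by apply: eq_bigr => c _; rewrite bformZl mxE.
Qed.

Lemma gram_combr A n m k (u : 'I_k -> {poly R}) (Y : 'M[R]_(n, m)) w :
  gram A u (mxcomb Y w) = gram A u w *m Y^T.
Proof.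
apply/matrixP => a b; rewrite !mxE bform_sumr.
by apply: eq_bigr => c _; rewrite bformZr !mxE mulrC.
Qed.

Lemma gram_tr A n m (u : 'I_n -> {poly R}) (v : 'I_m -> {poly R}) :
  symmetric_infmx A -> (gram A u v)^T = gram A v u.
Proof. by move=> symA; apply/matrixP => a b; rewrite !mxE bform_sym. Qed.

End FinitelySupportedForm.

Section QuadraticForms.
Variable F : fieldType.
Hypothesis two_neq0 : (2 : F) != 0.

Definition bq n (Z : 'M[F]_n) (x y : 'rV[F]_n) : F := (x *m Z *m y^T) 0 0.

Lemma bqDl n (Z : 'M[F]_n) x x' y : bq Z (x + x') y = bq Z x y + bq Z x' y.
Proof. by rewrite /bq !mulmxDl mxE. Qed.

Lemma bqDr n (Z : 'M[F]_n) x y y' : bq Z x (y + y') = bq Z x y + bq Z x y'.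
Proof. by rewrite /bq linearD /= mulmxDr mxE. Qed.

Lemma bqZl n (Z : 'M[F]_n) c x y : bq Z (c *: x) y = c * bq Z x y.
Proof. by rewrite /bq -!scalemxAl mxE. Qed.

Lemma bqZr n (Z : 'M[F]_n) c x y : bq Z x (c *: y) = c * bq Z x y.
Proof. by rewrite /bq linearZ /= -scalemxAr mxE. Qed.

Lemma bq_sym n (Z : 'M[F]_n) x y : Z^T = Z -> bq Z x y = bq Z y x.
Proof.
move=> sZ; rewrite /bq; have <- : (y *m Z *m x^T)^T = x *m Z *m y^T.
  by rewrite !trmx_mul trmxK sZ mulmxA.
by rewrite mxE.
Qed.

Lemma bq_mul m n (Z : 'M[F]_n) (A : 'M_(m, n)) x y :
  bq (A *m Z *m A^T) x y = bq Z (x *m A) (y *m A).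
Proof. by rewrite /bq trmx_mul !mulmxA. Qed.

Lemma bq_delta n (Z : 'M[F]_n) i j : bq Z 'e_i 'e_j = Z i j.
Proof. by rewrite /bq -rowE trmx_delta -colE !mxE. Qed.

Lemma sym_mx_congr m n (A : 'M[F]_(m, n)) (Z : 'M[F]_n) :
  Z^T = Z -> (A *m Z *m A^T)^T = A *m Z *m A^T.
Proof. by move=> sZ; rewrite !trmx_mul trmxK sZ mulmxA. Qed.

Lemma bq_polar n (Z : 'M[F]_n) x y : Z^T = Z ->
  bq Z (x + y) (x + y) = bq Z x x + 2 * bq Z x y + bq Z y y.
Proof. by move=> sZ; rewrite !bqDl !bqDr (bq_sym y x sZ); ring. Qed.

Lemma bq_parallelogram n (Z : 'M[F]_n) x y : Z^T = Z ->
  bq Z (x + y) (x + y) + bq Z (x - y) (x - y) = 2 * (bq Z x x + bq Z y y).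
Proof. by move=> sZ; rewrite -scaleN1r !bq_polar // !(bqZl, bqZr); ring. Qed.

Lemma bq_isotropic_pair n (Z : 'M[F]_n) x y : Z^T = Z ->
  bq Z x x = 0 -> bq Z y y = 0 -> bq Z (x + y) (x + y) = 0 -> bq Z x y = 0.
Proof.
move=> sZ xx yy; rewrite bq_polar // xx yy add0r addr0 => /eqP.
by rewrite mulf_eq0 (negPf two_neq0) => /eqP.
Qed.

Lemma sym_mx_anisotropic n (Z : 'M[F]_n) :
  Z^T = Z -> Z != 0 -> exists x : 'rV_n, bq Z x x != 0.
Proof.
move=> sZ /matrix0Pn[i [j Zij]].
have [Zii|] := eqVneq (bq Z 'e_i 'e_i) 0; last by exists 'e_i.
have [Zjj|] := eqVneq (bq Z 'e_j 'e_j) 0; last by exists 'e_j.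
exists ('e_i + 'e_j); apply: contra Zij => /eqP ij0.
by rewrite -bq_delta (bq_isotropic_pair sZ Zii Zjj ij0).
Qed.

(* If ker Phi were totally isotropic for G, the rows of G indexed by ker Phi
   and by a complement would both span at most codim(ker Phi) <= c dimensions. *)
Lemma exists_anisotropic_in_kernel m c (G : 'M[F]_m) (Phi : 'M[F]_(c, m)) :
  G^T = G -> (2 * c < \rank G)%N ->
  exists y : 'rV_m, y *m Phi^T = 0 /\ bq G y y != 0.
Proof.
move=> sG rG; set K0 := kermx Phi^T.
have [H0|Hn0] := eqVneq (K0 *m G *m K0^T) 0; last first.
  have [x qx] := sym_mx_anisotropic (sym_mx_congr K0 sG) Hn0.
  exists (x *m K0); split; first by rewrite -mulmxA mulmx_ker mulmx0.
  by rewrite -bq_mul.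
have rK : \rank K0 = (m - \rank Phi)%N by rewrite mxrank_ker mxrank_tr.
have rKG : (\rank (K0 *m G) <= m - \rank K0)%N.
  have /mxrankS : (K0 *m G <= kermx K0^T)%MS by exact/sub_kermxP.
  by rewrite mxrank_ker mxrank_tr.
have rKcG : (\rank (K0^C%MS *m G) <= m - \rank K0)%N.
  by rewrite (leq_trans (mxrankM_maxl _ _)) // mxrank_compl.
have rG_sum : (\rank G <= \rank (K0 *m G) + \rank (K0^C%MS *m G))%N.
  have : (1%:M *m G <= (K0 + K0^C)%MS *m G)%MS.
    by apply: submxMr; rewrite sub1mx addsmx_compl_full.
  rewrite mul1mx addsmxMr => /mxrankS /leq_trans; apply.
  exact: mxrank_adds_leqif.
have := rank_leq_row Phi; have := rank_leq_col Phi; lia.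
Qed.

End QuadraticForms.

Section SymmetricFactorization.
Variable K : numClosedFieldType.

Let two_neq0 : (2 : K) != 0. Proof. by rewrite pnatr_eq0. Qed.

(* One step of the symmetric Cholesky factorization with pivot d = Z 0 0:
   Z = B B^T for B = [s 0; s^-1 v^T C], where s^2 = d and C C^T is the
   Schur complement of d. *)
Lemma sym_factor_pivot n (Z : 'M[K]_(1 + n)) : Z^T = Z -> Z 0 0 != 0 ->
  (forall Z' : 'M[K]_n, Z'^T = Z' -> exists C : 'M[K]_n, C *m C^T = Z') ->
  exists B : 'M[K]_(1 + n), B *m B^T = Z.
Proof.
move=> sZ d0 IH.
set d := Z 0 0; set v := ursubmx Z; set Zr := drsubmx Z.
have hdl : dlsubmx Z = v^T by rewrite /v trmx_ursub sZ.
have hul : ulsubmx Z = d%:M.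
  by rewrite [LHS]mx11_scalar !mxE; congr (Z _ _ )%:M; apply: val_inj.
have sZ' : (Zr - d^-1 *: (v^T *m v))^T = Zr - d^-1 *: (v^T *m v).
  by rewrite linearB /= linearZ /= trmx_mul trmxK /Zr trmx_drsub sZ.
have [C hC] := IH _ sZ'.
set s := sqrtC d.
have s0 : s != 0 by rewrite sqrtC_eq0.
have ss : s * s = d by rewrite -expr2 sqrtCK.
exists (block_mx s%:M 0 (s^-1 *: v^T) C).
rewrite tr_block_mx mulmx_block -[RHS]submxK hul hdl.
rewrite ?trmx0 ?mulmx0 ?mul0mx ?addr0 ?add0r tr_scalar_mx linearZ /= trmxK.
congr block_mx.
- by rewrite -scalar_mxM ss.
- by rewrite mul_scalar_mx scalerA divff // scale1r.
- by rewrite scalar_mxC mul_scalar_mx scalerA divff // scale1r.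
- by rewrite -scalemxAl -scalemxAr scalerA -invfM ss hC addrC subrK.
Qed.

Lemma sym_mx_pivot n (Z : 'M[K]_n.+1) : Z^T = Z -> Z != 0 ->
  exists u : 'rV_n.+1, u 0 0 = 0 /\ bq Z ('e_0 + u) ('e_0 + u) != 0.
Proof.
move=> sZ /(sym_mx_anisotropic two_neq0 sZ)[x qx].
have [x0|x0] := eqVneq (x 0 0) 0; last first.
  exists ((x 0 0)^-1 *: x - 'e_0); split; first by rewrite !mxE !eqxx mulVf ?subrr.
  by rewrite addrC subrK bqZl bqZr !mulf_neq0 ?invr_eq0.
have [e0e0|] := eqVneq (bq Z 'e_0 'e_0) 0; last by exists 0; rewrite mxE addr0.
have : bq Z ('e_0 + x) ('e_0 + x) + bq Z ('e_0 - x) ('e_0 - x) != 0.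
  by rewrite bq_parallelogram // e0e0 add0r mulf_neq0.
have [eNx|] := eqVneq (bq Z ('e_0 - x) ('e_0 - x)) 0; last first.
  by exists (- x); rewrite mxE x0 oppr0.
by rewrite eNx addr0 => ?; exists x.
Qed.

(* The unipotent P = 1 + e_0^T u has row 0 equal to e_0 + u, so P Z P^T has a
   nonzero pivot. *)
Lemma sym_mx_factor n (Z : 'M[K]_n) : Z^T = Z -> exists B : 'M[K]_n, B *m B^T = Z.
Proof.
elim: n Z => [|n IH] Z sZ; first by exists 0; rewrite !thinmx0.
have [->|Z0] := eqVneq Z 0; first by exists 0; rewrite mul0mx.
have [u [u0 qu]] := sym_mx_pivot sZ Z0.
pose N : 'M[K]_n.+1 := delta_mx 0 0 *m u.
have uN : u *m (delta_mx 0 0 : 'cV_n.+1) = 0.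
  by rewrite -colE; apply/matrixP => i j; rewrite !mxE !ord1 u0.
have N2 : N *m N = 0 by rewrite mulmxA -(mulmxA _ u) uN mulmx0 mul0mx.
have PQ : (1%:M + N) *m (1%:M - N) = 1%:M.
  by rewrite mulmxDl !mulmxBr !mul1mx mulmx1 N2 subr0 subrK.
have QP : (1%:M - N) *m (1%:M + N) = 1%:M := mulmx1C PQ.
set Z' := (1%:M + N) *m Z *m (1%:M + N)^T.
have Z'00 : Z' 0 0 != 0.
  rewrite -bq_delta bq_mul mulmxDr mulmx1 mulmxA mul_delta_mx.
  have -> : (delta_mx 0 0 : 'M[K]_1) = 1%:M by apply/matrixP => i j; rewrite !ord1 !mxE.
  by rewrite mul1mx.
have [C hC] := sym_factor_pivot (sym_mx_congr _ sZ) Z'00 IH.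
exists ((1%:M - N) *m C).
rewrite trmx_mul mulmxA -(mulmxA _ C) hC /Z' !mulmxA QP mul1mx.
by rewrite -mulmxA -trmx_mul QP trmx1 mulmx1.
Qed.

End SymmetricFactorization.

Lemma mxrank_mxsub (F : fieldType) m n m' n' (f : 'I_m' -> 'I_m) (g : 'I_n' -> 'I_n)
    (A : 'M[F]_(m, n)) :
  (\rank (mxsub f g A) <= \rank A)%N.
Proof.
rewrite mxsubrc (leq_trans (mxrankS (rowsub_sub _ _))) //.
by rewrite -[A in colsub _ A]mulmx1 -mulmx_colsub mxrankM_maxl.
Qed.

Section FiniteRankWitness.
Variables (F : fieldType) (r : nat) (T : nat -> 'I_r -> F).
Hypothesis T_free : forall mu : 'I_r -> F,
  (forall a, \sum_(j < r) mu j * T a j = 0) -> forall j, mu j = 0.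

Let Tn n : 'M[F]_(n, r) := \matrix_(a < n, j < r) T a j.

Lemma prefix_submx n n' : (n <= n')%N -> (Tn n <= Tn n')%MS.
Proof.
move=> le_nn'; apply/row_subP => a.
have -> : row a (Tn n) = row (widen_ord le_nn' a) (Tn n') by apply/rowP => j; rewrite !mxE.
exact: row_sub.
Qed.

Lemma prefix_rank_grows n : (\rank (Tn n) < r)%N ->
  exists n', (\rank (Tn n) < \rank (Tn n'))%N.
Proof.
move=> rn; have : kermx (Tn n)^T != 0.
  by rewrite -mxrank_eq0 mxrank_ker mxrank_tr subn_eq0 -ltnNge.
case/matrix0Pn => i [j0 mu_j0].
set mu := row i (kermx (Tn n)^T).
have mu_ker : mu *m (Tn n)^T = 0 by rewrite -row_mul mulmx_ker row0.
have mu0 : mu 0 j0 != 0 by rewrite mxE.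
have [a Ta] : exists a, \sum_(j < r) mu 0 j * T a j != 0.
  apply: NNPP => no_a; move: mu0; rewrite (@T_free (fun j => mu 0 j)) ?eqxx // => a.
  by apply/eqP; apply: (contra_notT _ no_a) => Ta; exists a.
have le_nn' := leq_maxl n a.+1.
exists (maxn n a.+1); rewrite (ltn_leqif (mxrank_leqif_sup (prefix_submx le_nn'))).
apply: contra Ta => /submxP[D eqD].
have ha : (a < maxn n a.+1)%N by rewrite leq_max ltnSn orbT.
have : (Tn (maxn n a.+1) *m mu^T) (Ordinal ha) 0 = 0.
  by rewrite eqD -mulmxA -(trmxK (Tn n)) -trmx_mul mu_ker trmx0 mulmx0 mxE.
by rewrite mxE => /eqP; congr (_ == 0); apply: eq_bigr => j _; rewrite !mxE mulrC.
Qed.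

Lemma exists_prefix_full_rank : exists n, \rank (Tn n) = r.
Proof.
suff /(_ r (leqnn r))[n rn] : forall k, (k <= r)%N -> exists n, (k <= \rank (Tn n))%N.
  by exists n; apply/eqP; rewrite eqn_leq rank_leq_col.
elim=> [|k IH] lt_kr; first by exists 0%N.
have [n le_k_rn] := IH (ltnW lt_kr).
have [lt_k_rn|] := ltnP k (\rank (Tn n)); first by exists n.
move=> /(conj le_k_rn)/andP; rewrite -eqn_leq => /eqP rn.
have [n' lt_rn] : exists n', (\rank (Tn n) < \rank (Tn n'))%N.
  by apply: prefix_rank_grows; rewrite -rn.
by exists n'; rewrite rn.
Qed.

End FiniteRankWitness.

Section AnisotropicVectors.
Variable F : fieldType.
Hypothesis two_neq0 : (2 : F) != 0.

Definition ortho (cs : seq ({poly F} * infmx F)) (y : {poly F}) :=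
  all (fun c => bform c.2 c.1 y == 0) cs.

Lemma orthoD cs x y : ortho cs x -> ortho cs y -> ortho cs (x + y).
Proof.
elim: cs => //= c cs IH /andP[cx ox] /andP[cy oy].
by rewrite IH // bformDr (eqP cx) (eqP cy) addr0 eqxx.
Qed.

Lemma orthoZ cs t y : ortho cs y -> ortho cs (t *: y).
Proof.
elim: cs => //= c cs IH /andP[cy oy].
by rewrite IH // bformZr (eqP cy) mulr0 eqxx.
Qed.

(* The Gram matrix of A on v_1, ..., v_r, X^0, ..., X^(n-1) contains the
   full-rank block (A v_j)_a, so it has rank >= r. *)
Lemma exists_anisotropic_ortho (A : infmx F) r cs :
  symmetric_infmx A -> infmx_rank_ge A r -> (2 * size cs < r)%N ->
  exists y, ortho cs y /\ bform A y y != 0.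
Proof.
move=> symA [N [v v_free]] lt_cs_r.
pose T a (j : 'I_r) := \sum_(c < N) A a c * v j c.
have [n rn] := exists_prefix_full_rank (T := T) v_free.
pose z (t : 'I_(r + n)) : {poly F} :=
  match split t with inl j => \sum_(c < N) v j c *: 'X^c | inr a => 'X^a end.
pose G := gram A z z.
have TG : mxsub (@rshift r n) (@lshift r n) G = \matrix_(a < n, j < r) T a j.
  apply/matrixP => a j; rewrite !mxE /z (unsplitK (inr a)) (unsplitK (inl j)) /=.
  by rewrite bform_sumr; apply: eq_bigr => c _; rewrite bformZr bformXX mulrC.
have rG : (r <= \rank G)%N by rewrite -{1}rn -TG mxrank_mxsub.
pose c0 : {poly F} * infmx F := (0, fun _ _ => 0).
pose Phi := \matrix_(s < size cs, t < r + n) bform (nth c0 cs s).2 (nth c0 cs s).1 (z t).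
have [y [yPhi qy]] :=
  exists_anisotropic_in_kernel two_neq0 Phi (gram_tr z z symA) (leq_trans lt_cs_r rG).
exists (mxcomb y z 0); split.
  apply/(all_nthP c0) => s lt_s; have /matrixP/(_ 0 (Ordinal lt_s)) := yPhi.
  rewrite !mxE => yPhi_s; apply/eqP; rewrite -yPhi_s /mxcomb bform_sumr.
  by apply: eq_bigr => t _; rewrite bformZr !mxE.
suff -> : bform A (mxcomb y z 0) (mxcomb y z 0) = bq G y y by [].
by rewrite /bq -mulmxA -gram_combr -gram_combl mxE.
Qed.

End AnisotropicVectors.

Lemma exists_isotropic_shift (K : numClosedFieldType) (A B : infmx K) x y :
  symmetric_infmx A -> symmetric_infmx B -> bform A x y = 0 -> bform B x y = 0 ->
  bform B y y != 0 ->
  exists t, bform B (x + t *: y) (x + t *: y) = 0 /\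
    bform A (x + t *: y) (x + t *: y) * bform B y y =
    bform A x x * bform B y y - bform B x x * bform A y y.
Proof.
move=> symA symB Axy Bxy By0; exists (sqrtC (- bform B x x / bform B y y)).
by rewrite !bform_add_orth // sqrtCK; split; field.
Qed.

Lemma constraint_count_lt p l k b : (k < p)%N -> (b < l)%N ->
  (2 * (l * k + b * k.+1 + p * k) < p * 2 ^ p * l)%N.
Proof.
case: p => // p; case: l => // l lt_kp lt_bl.
have : (p.+1 <= 2 ^ p)%N by rewrite ltn_expl.
by rewrite expnS; nia.
Qed.

Lemma mulmx_shift_square (R : comNzRingType) n m (B E : 'M[R]_(n, m)) :
  E *m (B - E)^T + ((B - E) *m E^T + (B - E) *m 1%:M *m (B - E)^T) =
  B *m B^T - E *m E^T.
Proof.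
rewrite mulmx1 -mulmxDr -linearD /= (addrC E) subrK linearB /= mulmxBr mulmxBl.
by rewrite [LHS]addrC addrA subrK.
Qed.

Section OrthonormalSystems.
Variables (K : numClosedFieldType) (p : nat) (M : 'I_p -> infmx K).
Hypothesis symM : forall i, symmetric_infmx (M i).
Variable r : nat.
Hypothesis rkM : tuple_rank_ge M r.

Let two_neq0 : (2 : K) != 0. Proof. by rewrite pnatr_eq0. Qed.

(* Induction on q: a vector v for the first q forms is corrected by a vector w
   that is orthogonal to v for every M_i and anisotropic for a combination rho
   of pi and M_q chosen so that some v + t w is M_q-isotropic and still
   pi-anisotropic; each step costs p new constraints. *)
Lemma exists_isotropic_anisotropic q (pi : 'I_p -> K) cs :
  (exists2 i : 'I_p, (q <= i)%N & pi i != 0) -> (2 * (size cs + p * q) < r)%N ->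
  exists y, [/\ ortho cs y, forall i : 'I_p, (i < q)%N -> bform (M i) y y = 0
              & bform (lincomb_infmx pi M) y y != 0].
Proof.
elim: q pi cs => [|q IH] pi cs [i0 lt_q_i0 pi_i0] budget.
  have [|y [oy ay]] := exists_anisotropic_ortho two_neq0 (lincomb_infmx_sym pi symM)
    (rkM (ex_intro _ i0 pi_i0)) (cs := cs); first by rewrite muln0 addn0 in budget.
  by exists y.
have lt_q_p : (q < p)%N := ltn_trans lt_q_i0 (ltn_ord i0).
pose iq : 'I_p := Ordinal lt_q_p.
have iso_next y : (forall i : 'I_p, (i < q)%N -> bform (M i) y y = 0) ->
    bform (M iq) y y = 0 -> forall i : 'I_p, (i < q.+1)%N -> bform (M i) y y = 0.
  move=> iso yy i; rewrite ltnS leq_eqVlt => /predU1P[ei|]; last exact: iso.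
  by have -> : i = iq by apply: val_inj.
rewrite mulnS in budget.
have [v [ov iso_v ani_v]] := IH pi cs (ex_intro2 _ _ i0 (ltnW lt_q_i0) pi_i0) ltac:(lia).
set c := bform (M iq) v v; set d := bform (lincomb_infmx pi M) v v.
have [c0|c_neq0] := eqVneq c 0; first by exists v; split => //; apply: iso_next.
pose rho i := c * pi i - d * (i == iq)%:R.
have rho_i0 : rho i0 != 0.
  rewrite /rho; have -> : (i0 == iq) = false by rewrite -val_eqE /= gtn_eqF.
  by rewrite mulr0 subr0 mulf_neq0.
pose cs' := cs ++ [seq (v, M i) | i <- enum 'I_p].
have [w [ow iso_w ani_w]] := IH rho cs' (ex_intro2 _ _ i0 (ltnW lt_q_i0) rho_i0)
  ltac:(by rewrite size_cat size_map size_enum_ord; lia).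
have ow_cs : ortho cs w by move: ow; rewrite /ortho all_cat => /andP[].
have vw i : bform (M i) v w = 0.
  move: ow; rewrite /ortho all_cat all_map => /andP[_ /allP/(_ i (mem_enum _ i))].
  exact: eqP.
have vw_comb mu : bform (lincomb_infmx mu M) v w = 0.
  by rewrite bform_lincomb big1 // => i _; rewrite vw mulr0.
set e := bform (M iq) w w; set P := bform (lincomb_infmx pi M) w w.
have rho_w : bform (lincomb_infmx rho M) w w = c * P - d * e.
  by rewrite bform_lincombB bform_lincomb_delta.
have [e0|e_neq0] := eqVneq e 0.
  exists w; split => //; first exact: iso_next.
  by move: ani_w; rewrite rho_w e0 mulr0 subr0 mulf_eq0 negb_or => /andP[].
have [t [iso_q ani_t]] :=
  exists_isotropic_shift (lincomb_infmx_sym pi symM) (symM iq) (vw_comb pi) (vw iq) e_neq0.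
exists (v + t *: w); split.
- exact: orthoD ov (orthoZ _ ow_cs).
- apply: iso_next => // i lt_i_q.
  by rewrite (bform_add_orth _ (symM _) (vw _)) iso_v ?iso_w ?mulr0 ?addr0.
apply: contra ani_w => /eqP ani0; move: ani_t.
by rewrite ani0 mul0r rho_w -oppr_eq0 opprB => <-.
Qed.

Lemma exists_unit_vector (k : 'I_p) cs : (2 * (size cs + p * k) < r)%N ->
  exists w, [/\ ortho cs w, forall i : 'I_p, (i < k)%N -> bform (M i) w w = 0
              & bform (M k) w w = 1].
Proof.
move=> budget; have [|y [oy iso_y]] := exists_isotropic_anisotropic
  (pi := fun i => (i == k)%:R) (ex_intro2 _ _ k (leqnn k) _) budget.
  by rewrite eqxx oner_eq0.
rewrite bform_lincomb_delta => ani_y; set s := sqrtC (bform (M k) y y).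
have s_neq0 : s != 0 by rewrite sqrtC_eq0.
exists (s^-1 *: y); split; first exact: orthoZ.
  by move=> i lt_ik; rewrite bformZl bformZr iso_y ?mulr0.
by rewrite bformZl bformZr mulrA -invfM -expr2 sqrtCK mulVf.
Qed.

Definition orthonormal_seq (k : 'I_p) n (h : 'I_n -> {poly K}) (ws : seq {poly K}) :=
  [/\ uniq ws,
      forall x y (i : 'I_p), x \in ws -> y \in ws -> (i <= k)%N ->
        bform (M i) x y = ((i == k) && (x == y))%:R
    & forall a x (i : 'I_p), x \in ws -> (i < k)%N -> bform (M i) (h a) x = 0].

Lemma orthonormal_seq_rcons (k : 'I_p) n (h : 'I_n -> {poly K}) ws :
  orthonormal_seq k h ws -> (2 * (n * k + size ws * k.+1 + p * k) < r)%N ->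
  exists w, orthonormal_seq k h (rcons ws w).
Proof.
move=> [uniq_ws ws_on ws_h] budget.
pose below j := [seq i : 'I_p <- enum 'I_p | (i < j)%N].
pose cs := [seq (h a, M i) | a <- enum 'I_n, i <- below k] ++
           [seq (x, M i) | x <- ws, i <- below k.+1].
have [|w [ow iso_w unit_w]] := @exists_unit_vector k cs.
  rewrite size_cat !size_allpairs size_enum_ord.
  by rewrite !size_enum_ord_lt ?(ltnW (ltn_ord k)) ?budget.
move: ow; rewrite /ortho all_cat => /andP[/all_allpairsP ow_h /all_allpairsP ow_ws].
have h_w a (i : 'I_p) : (i < k)%N -> bform (M i) (h a) w = 0.
  move=> lt_ik; apply/eqP/ow_h; first by rewrite mem_enum.
  by rewrite mem_filter lt_ik mem_enum.
have ws_w x (i : 'I_p) : x \in ws -> (i <= k)%N -> bform (M i) x w = 0.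
  by move=> x_ws le_ik; apply/eqP/ow_ws; rewrite // mem_filter ltnS le_ik mem_enum.
have w_notin : w \notin ws.
  by apply/negP => /ws_w/(_ (leqnn k)); rewrite unit_w => /eqP; rewrite oner_eq0.
have w_neq x : x \in ws -> (w == x) = false.
  by move=> x_ws; apply: contraNF w_notin => /eqP ->.
exists w; split; first by rewrite rcons_uniq w_notin.
  move=> x y i; rewrite !mem_rcons !in_cons.
  case/predU1P=> [->|x_ws]; case/predU1P=> [->|y_ws] le_ik.
  - rewrite eqxx andbT; have [->|ne_ik] := eqVneq i k; first exact: unit_w.
    by apply: iso_w; rewrite ltn_neqAle le_ik andbT; exact: ne_ik.
  - by rewrite bform_sym ?ws_w ?w_neq ?andbF.
  - by rewrite ws_w // (eq_sym x) w_neq ?andbF.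
  - exact: ws_on.
move=> a x i; rewrite mem_rcons in_cons => /predU1P[->|x_ws] lt_ik.
  exact: h_w.
exact: ws_h.
Qed.

Lemma exists_orthonormal_block (k : 'I_p) n m (h : 'I_n -> {poly K}) :
  (forall b, b < m -> 2 * (n * k + b * k.+1 + p * k) < r)%N ->
  exists w : 'I_m -> {poly K},
    [/\ forall i : 'I_p, (i < k)%N -> gram (M i) h w = 0,
        forall i : 'I_p, (i < k)%N -> gram (M i) w w = 0
      & gram (M k) w w = 1%:M].
Proof.
move=> budget.
suff /(_ m (leqnn m))[ws [size_ws [uniq_ws ws_on ws_h]]] : forall b, (b <= m)%N ->
    exists ws, size ws = b /\ orthonormal_seq k h ws.
  have ws_b (b : 'I_m) : ws`_b \in ws by rewrite mem_nth ?size_ws.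
  have ltn_neq (i : 'I_p) : (i < k)%N -> (i == k) = false.
    by move=> lt_ik; rewrite -val_eqE ltn_eqF.
  exists (fun b => ws`_b); split.
  - by move=> i lt_ik; apply/matrixP => a b; rewrite !mxE ws_h.
  - move=> i lt_ik; apply/matrixP => a b.
    by rewrite !mxE ws_on ?ltn_neq ?(ltnW lt_ik).
  - by apply/matrixP => a b; rewrite !mxE ws_on // eqxx nth_uniq ?size_ws.
elim=> [|b IH] lt_bm; first by exists [::].
have [ws [size_ws ows]] := IH (ltnW lt_bm).
have [w ows'] := orthonormal_seq_rcons ows ltac:(by rewrite size_ws budget).
by exists (rcons ws w); rewrite size_rcons size_ws.
Qed.

Lemma exists_gram_realization l (X : 'I_p -> 'M[K]_l) :
  (p * 2 ^ p * l <= r)%N -> (forall i, (X i)^T = X i) ->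
  exists h : 'I_l -> {poly K}, forall i, gram (M i) h h = X i.
Proof.
move=> le_r sX.
suff /(_ p (leqnn p))[h hX] : forall k, (k <= p)%N ->
    exists h : 'I_l -> {poly K}, forall i : 'I_p, (i < k)%N -> gram (M i) h h = X i.
  by exists h => i; apply: hX.
elim=> [|k IH] lt_kp; first by exists (fun=> 0).
have [h hX] := IH (ltnW lt_kp).
pose ik : 'I_p := Ordinal lt_kp.
have [|w [hw ww wk]] := @exists_orthonormal_block ik l l h.
  by move=> b lt_bl; apply: leq_trans le_r; exact: constraint_count_lt.
set E := gram (M ik) h w.
have sZ : (X ik - gram (M ik) h h + E *m E^T)^T = X ik - gram (M ik) h h + E *m E^T.
  by rewrite linearD linearB /= sX gram_tr // trmx_mul trmxK.
have [B BBT] := sym_mx_factor sZ.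
exists (fun a => h a + mxcomb (B - E) w a) => i lt_ik1.
rewrite gramDl !gramDr !gram_combr !gram_combl -[gram (M i) w h](gram_tr _ _ (symM i)).
have [lt_ik|->] : (i < k)%N \/ i = ik.
  by move: lt_ik1; rewrite ltnS leq_eqVlt => /predU1P[ei|]; [right; apply: val_inj|left].
  by rewrite hw // ww // trmx0 !mulmx0 !mul0mx !addr0 hX.
by rewrite wk -addrA mulmx_shift_square BBT addrK addrC subrK.
Qed.

End OrthonormalSystems.

Section OrbitProjection.
Variable F : fieldType.

Definition ext_row k (g : 'M[F]_k) (a : nat) : {poly F} :=
  \poly_(c < k + a.+1) ext_mx g a c.

Lemma act_infmxE k (g : 'M[F]_k) A a b :
  act_infmx g A a b = bform A (ext_row g a) (ext_row g b).
Proof.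
rewrite (bformE A (size_poly _ _) (size_poly _ _)).
by apply: eq_bigr => c _; apply: eq_bigr => d _; rewrite !coef_poly !ltn_ord.
Qed.

Lemma ext_mxE k (g : 'M[F]_k) (i j : 'I_k) : ext_mx g i j = g i j.
Proof. by rewrite /ext_mx !valK. Qed.

Lemma ext_mx_id k (g : 'M[F]_k) a c : (k <= c)%N -> ext_mx g a c = (a == c)%:R.
Proof.
move=> le_kc; rewrite /ext_mx.
have -> : insub c = None :> option 'I_k by rewrite insubN // -leqNgt.
by case: insub => [?|]; case: (a == c).
Qed.

Lemma gram_in_proj_orbit p l (M : 'I_p -> infmx F) k (g : 'M[F]_k)
    (u : 'I_l -> {poly F}) :
  g \in unitmx -> (forall a : 'I_l, ext_row g a = u a) ->
  proj_orbit M (fun i => gram (M i) u u).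
Proof.
move=> g_unit gu; exists k, g; split => // i.
by apply/matrixP => a b; rewrite !mxE act_infmxE !gu.
Qed.

Lemma ext_row_block l N (h : 'I_l -> {poly F}) (t : F) (a : 'I_l) :
  (size (h a) <= l + N)%N ->
  ext_row (block_mx (t%:M + \matrix_(a, c) (h a)`_c)
                    (\matrix_(a < l, c < N) (h a)`_(l + c)) 0 1%:M) a
    = h a + t *: 'X^a.
Proof.
move=> size_ha; apply/polyP => c; rewrite coef_poly coefD coefZ coefXn.
have lt_al : (a < l)%N := ltn_ord a.
have [lt_c|ge_c] := ltnP c (l + N); last first.
  have ca : (c == a) = false.
    by rewrite gtn_eqF // (leq_trans lt_al) // (leq_trans (leq_addr N l)).
  rewrite nth_default ?(leq_trans size_ha) // ca mulr0 addr0.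
  by case: ifP => // _; rewrite ext_mx_id ?(leq_trans (leq_addr N l)) // eq_sym ca.
rewrite ltn_addr // -[a : nat]/(val (lshift N a)) -[c]/(val (Ordinal lt_c)) ext_mxE.
case: (splitP (Ordinal lt_c)) => [c' /= ec|c' /= ec].
  have -> : Ordinal lt_c = lshift N c' by apply: val_inj.
  by rewrite block_mxEul !mxE ec eq_sym mulr_natr addrC.
have -> : Ordinal lt_c = rshift l c' by apply: val_inj.
rewrite block_mxEur !mxE ec gtn_eqF ?mulr0 ?addr0 //.
by apply: leq_trans (leq_addr _ _).
Qed.

Lemma line_in_proj_orbit p l (M : 'I_p -> infmx F) (h : 'I_l -> {poly F}) (t : F) :
  \det (t%:M + \matrix_(a, c) (h a)`_c) != 0 ->
  proj_orbit M (fun i => gram (M i) (fun a => h a + t *: 'X^a)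
                                  (fun a => h a + t *: 'X^a)).
Proof.
move=> det_nz; pose N := (\sum_(a < l) size (h a))%N.
apply: (@gram_in_proj_orbit _ _ _ _ (block_mx (t%:M + \matrix_(a, c) (h a)`_c)
                                          (\matrix_(a < l, c < N) (h a)`_(l + c)) 0 1%:M)).
  by rewrite unitmxE det_ublock det1 mulr1 unitfE.
move=> a; apply: ext_row_block; rewrite (leq_trans _ (leq_addl l N)) //.
by rewrite /N (bigD1 a) //= leq_addr.
Qed.

End OrbitProjection.

Section PolynomialFunctions.
Variable R : comNzRingType.

Lemma peval_ext V (e e' : V -> R) (f : pexpr V R) :
  e =1 e' -> peval e f = peval e' f.
Proof. by move=> ee'; elim: f => //= [f1 -> f2 ->|f1 -> f2 ->]. Qed.

Lemma peval_horner V (Q : V -> {poly R}) (f : pexpr V R) :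
  exists P : {poly R}, forall t, peval (fun v => (Q v).[t]) f = P.[t].
Proof.
elim: f => [c|v|f1 [P1 h1] f2 [P2 h2]|f1 [P1 h1] f2 [P2 h2]].
- by exists c%:P => t; rewrite hornerC.
- by exists (Q v).
- by exists (P1 + P2) => t /=; rewrite h1 h2 hornerD.
- by exists (P1 * P2) => t /=; rewrite h1 h2 hornerM.
Qed.

Lemma horner_char_polyN n (A : 'M[R]_n) t : (char_poly (- A)).[t] = \det (t%:M + A).
Proof.
rewrite /char_poly -horner_evalE -det_map_mx; congr (\det _).
apply/matrixP => a c; rewrite !mxE /= horner_evalE.
by rewrite hornerD hornerN hornerC opprK hornerMn hornerX.
Qed.

End PolynomialFunctions.

Lemma poly_eq0_horner (R : numDomainType) (q : {poly R}) :
  (forall t, q.[t] = 0) -> q = 0.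
Proof.
move=> q0; apply/eqP; apply: contraT => nz_q.
have := max_poly_roots nz_q (rs := [seq i%:R | i <- iota 0 (size q)]).
rewrite size_map size_iota ltnn; apply; first by apply/allP => t _; rewrite /root q0.
by rewrite map_inj_uniq ?iota_uniq // => m n /eqP; rewrite eqr_nat => /eqP.
Qed.

Theorem lemma3p9 (K : numClosedFieldType) (p l : nat)
    (M : 'I_p -> infmx K)
    (hsym : forall i, symmetric_infmx (M i))
    (hrk : tuple_rank_ge M (p * 2 ^ p * l)%N) :
  @zariski_dense_sym K p l (@proj_orbit K p l M).
Proof.
move=> f f0 X symX.
have [h hX] := exists_gram_realization hsym hrk (leqnn _) symX.
pose Q (v : 'I_p * 'I_l * 'I_l) :=
  bform_line (M v.1.1) (h v.1.2) 'X^(v.1.2) (h v.2) 'X^(v.2).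
have [P hP] := peval_horner Q f.
pose H : 'M[K]_l := \matrix_(a, c) (h a)`_c.
have PH : P * char_poly (- H) = 0.
  apply: poly_eq0_horner => t; rewrite hornerM horner_char_polyN.
  have [->|det_nz] := eqVneq (\det (t%:M + H)) 0; first by rewrite mulr0.
  pose Y i := gram (M i) (fun a => h a + t *: 'X^a) (fun a => h a + t *: 'X^a).
  rewrite -hP (peval_ext (e' := coords Y)) => [|v]; last by rewrite /coords mxE bform_lineE.
  by rewrite f0 ?mul0r //; exact: line_in_proj_orbit.
have P0 : P = 0.
  by move/eqP: PH; rewrite mulf_eq0 (negPf (monic_neq0 (char_poly_monic _))) orbF => /eqP.
transitivity (peval (fun v => (Q v).[0]) f); last by rewrite hP P0 horner0.
by apply: peval_ext => v; rewrite bform_lineE !scale0r !addr0 /coords -hX mxE.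
Qed.
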